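(* Let $A,B,C$ be non-collinear points of the real affine plane. Let $A^{+},A^{-}$ be points on line $\overleftrightarrow{BC}$, let $B^{+},B^{-}$ be points on line $\overleftrightarrow{CA}$, and let $C^{+},C^{-}$ be points on line $\overleftrightarrow{AB}$, with $A^{+}\neq C$, $A^{-}\neq B$, $B^{+}\neq A$, $B^{-}\neq C$, $C^{+}\neq B$, $C^{-}\neq A$. Define the real numbers $$a^{+}=\frac{|BA^{+}|}{|A^{+}C|},\quad b^{+}=\frac{|CB^{+}|}{|B^{+}A|},\quad c^{+}=\frac{|AC^{+}|}{|C^{+}B|},\quad a^{-}=\frac{|CA^{-}|}{|A^{-}B|},\quad b^{-}=\frac{|AB^{-}|}{|B^{-}C|},\quad c^{-}=\frac{|BC^{-}|}{|C^{-}A|}.$$ Then (under these hypotheses $B^{+}\neq C^{-}$, $C^{+}\neq A^{-}$, $A^{+}\neq B^{-}$, so the lines below are well defined) the three lines $\overleftrightarrow{B^{+}C^{-}}$, $\overleftrightarrow{C^{+}A^{-}}$, $\overleftrightarrow{A^{+}B^{-}}$ pass through a common point of the projective plane (i.e. they are concurrent at a finite point, or are mutually parallel) if and only if $$a^{+}b^{+}c^{+}+a^{-}b^{-}c^{-}=1-a^{+}a^{-}-b^{+}b^{-}-c^{+}c^{-}.$$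
   Context: Segment lengths are signed: for distinct points $P,Q,R$ on one of the lines $\overleftrightarrow{AB}$, $\overleftrightarrow{BC}$, $\overleftrightarrow{CA}$, $|PQ|$ denotes the signed length, positive when $\overrightarrow{PQ}$ points in the direction of $\overrightarrow{AB}$, $\overrightarrow{BC}$, $\overrightarrow{CA}$ respectively; ratios $|PX|/|XQ|$ of collinear signed lengths are thus well-defined real numbers, with $|PP|/|PQ|=0$. Equivalently, e.g. $A^{+}=(B+a^{+}C)/(1+a^{+})$ and $A^{-}=(a^{-}B+C)/(1+a^{-})$ as vectors, and similarly for the other points. *)

(* points of the affine plane over an ordered field R
   (realFieldType; the statement is purely algebraic) are row vectors 'rV[R]_2. *)
From HB Require Import structures.
From mathcomp Require Import all_boot all_order all_algebra.
Set Implicit Arguments. Unset Strict Implicit. Unset Printing Implicit Defensive.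
Import Order.TTheory GRing.Theory Num.Theory.
Local Open Scope ring_scope.

Section Plane.
Variable R : realFieldType.
Definition point := 'rV[R]_2.

Definition cross (u v : point) : R := u 0 0 * v 0 1 - u 0 1 * v 0 0.

Definition on_line (P Q X : point) : Prop := cross (Q - P) (X - P) = 0.

Definition collinear (P Q X : point) : Prop := cross (Q - P) (X - P) = 0.

Definition parallel (P Q S T : point) : Prop := cross (Q - P) (T - S) = 0.

(* r is the signed ratio |PX|/|XQ| for collinear P, X, Q with X <> Q:
   vectorially X - P = r (Q - X), i.e. X = (P + r Q)/(1 + r). *)
Definition signed_ratio (P X Q : point) (r : R) : Prop := X - P = r *: (Q - X).

Definition proj_concurrent (P1 Q1 P2 Q2 P3 Q3 : point) : Prop :=
  (exists X, [/\ on_line P1 Q1 X, on_line P2 Q2 X & on_line P3 Q3 X]) \/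
  [/\ parallel P1 Q1 P2 Q2, parallel P2 Q2 P3 Q3 & parallel P1 Q1 P3 Q3].
End Plane.

From HB Require Import structures.
From mathcomp Require Import all_boot all_order all_algebra.
From mathcomp Require Import ring.
Set Implicit Arguments. Unset Strict Implicit. Unset Printing Implicit Defensive.
Import Order.TTheory GRing.Theory Num.Theory.
Local Open Scope ring_scope.

(* In homogeneous coordinates the line through two points has coefficient
   vector given by their cross product, and three lines meet in a point of
   the projective plane exactly when the 3x3 determinant of their coefficient
   vectors vanishes.  Placing the six points as [(P + r Q)/(1 + r)], this
   determinant factors, up to the nonzero denominators, as the square of the
   area form of [A, B, C] times the difference of the two sides of the
   claimed identity. *)

Section LineEquations.
Variable F : fieldType.

Definition eval_line (l : F * F * F) (x y : F) : F := x * l.1.1 + y * l.1.2 + l.2.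

Definition minor2 (l1 l2 : F * F * F) : F := l1.1.1 * l2.1.2 - l1.1.2 * l2.1.1.

Definition det3 (l1 l2 l3 : F * F * F) : F :=
  l1.2 * minor2 l2 l3 - l2.2 * minor2 l1 l3 + l3.2 * minor2 l1 l2.

Lemma det3_rotate l1 l2 l3 : det3 l1 l2 l3 = det3 l2 l3 l1.
Proof. by rewrite /det3 /minor2; ring. Qed.

Lemma det3_swap23 l1 l2 l3 : det3 l1 l3 l2 = - det3 l1 l2 l3.
Proof. by rewrite /det3 /minor2; ring. Qed.

Lemma det3_eval_line l1 l2 l3 x y :
  det3 l1 l2 l3 = eval_line l1 x y * minor2 l2 l3 - eval_line l2 x y * minor2 l1 l3
                  + eval_line l3 x y * minor2 l1 l2.
Proof. by rewrite /det3 /minor2 /eval_line; ring. Qed.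

(* Cramer's rule on the first two equations. *)
Lemma det3_eq0_common_zero {l1 l2 l3 : F * F * F} :
  minor2 l1 l2 != 0 -> det3 l1 l2 l3 = 0 ->
  exists x y, [/\ eval_line l1 x y = 0, eval_line l2 x y = 0 & eval_line l3 x y = 0].
Proof.
move=> m12 d0; set m := minor2 l1 l2.
exists ((l1.1.2 * l2.2 - l1.2 * l2.1.2) / m), ((l1.2 * l2.1.1 - l1.1.1 * l2.2) / m).
rewrite /eval_line /m /minor2 in m12 *; split; [by field | by field |].
by rewrite -[RHS](mul0r (minor2 l1 l2)^-1) -d0 /det3 /minor2; field.
Qed.

Lemma det3_eq0P l1 l2 l3 :
  (exists x y, [/\ eval_line l1 x y = 0, eval_line l2 x y = 0 & eval_line l3 x y = 0])
  \/ [/\ minor2 l1 l2 = 0, minor2 l2 l3 = 0 & minor2 l1 l3 = 0]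
  <-> det3 l1 l2 l3 = 0.
Proof.
split.
  case=> [[x [y [e1 e2 e3]]] | [m12 m23 m13]].
    by rewrite (det3_eval_line _ _ _ x y) e1 e2 e3 !mul0r subrr addr0.
  by rewrite /det3 m12 m23 m13 !mulr0 subrr addr0.
move=> d0; have [m12|m12] := eqVneq (minor2 l1 l2) 0; last first.
  by left; apply: det3_eq0_common_zero.
have [m23|m23] := eqVneq (minor2 l2 l3) 0; last first.
  rewrite det3_rotate in d0; left.
  by have [x [y [e2 e3 e1]]] := det3_eq0_common_zero m23 d0; exists x, y.
have [m13|m13] := eqVneq (minor2 l1 l3) 0; first by right.
have d0' : det3 l1 l3 l2 = 0 by rewrite det3_swap23 d0 oppr0.
left; have [x [y [e1 e3 e2]]] := det3_eq0_common_zero m13 d0'.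
by exists x, y.
Qed.

End LineEquations.

Section PlaneGeometry.
Variable R : realFieldType.
Implicit Types (A B C P Q S T X : point R) (r : R).

Definition line_eqn P Q : R * R * R :=
  (P 0 1 - Q 0 1, Q 0 0 - P 0 0, P 0 0 * Q 0 1 - P 0 1 * Q 0 0).

Lemma on_lineE P Q X : on_line P Q X = (eval_line (line_eqn P Q) (X 0 0) (X 0 1) = 0).
Proof. by congr (_ = 0); rewrite /cross /eval_line !mxE /=; ring. Qed.

Lemma parallelE P Q S T : parallel P Q S T = (minor2 (line_eqn P Q) (line_eqn S T) = 0).
Proof. by congr (_ = 0); rewrite /cross /minor2 !mxE /=; ring. Qed.

Lemma proj_concurrentE P1 Q1 P2 Q2 P3 Q3 :
  proj_concurrent P1 Q1 P2 Q2 P3 Q3 <->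
  det3 (line_eqn P1 Q1) (line_eqn P2 Q2) (line_eqn P3 Q3) = 0.
Proof.
rewrite -det3_eq0P /proj_concurrent !parallelE.
split; (case=> [h|h]; last by right); left.
  by case: h => X; rewrite !on_lineE => -[e1 e2 e3]; exists (X 0 0), (X 0 1).
case: h => x [y [e1 e2 e3]]; exists (\row_(j < 2) if j == 0 then x else y).
by rewrite !on_lineE !mxE.
Qed.

Lemma noncollinear_neq A B C : ~ collinear A B C -> [/\ B != C, C != A & A != B].
Proof.
rewrite /collinear /cross => ncol; split; apply/eqP => e; apply: ncol;
  by rewrite ?e !mxE; ring.
Qed.

Definition divpoint P Q r : point R := (1 + r)^-1 *: (P + r *: Q).

Lemma signed_ratio_neqN1 P X Q r : signed_ratio P X Q r -> P != Q -> 1 + r != 0.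
Proof.
move=> hX; apply: contra_neq => r1.
have r_N1 : r = -1 by apply/eqP; rewrite -subr_eq0 opprK addrC r1.
by move: hX; rewrite /signed_ratio r_N1 scaleN1r opprB => /addrI /oppr_inj.
Qed.

Lemma signed_ratio_divpoint P X Q r :
  signed_ratio P X Q r -> 1 + r != 0 -> X = divpoint P Q r.
Proof.
move=> hX r1; apply/rowP => i; move/rowP/(_ i): hX; rewrite !mxE => hX.
have -> : P 0 i + r * Q 0 i = (1 + r) * X 0 i - (X 0 i - P 0 i - r * (Q 0 i - X 0 i)).
  by ring.
by rewrite hX subrr subr0 mulKf.
Qed.

Lemma det3_divpoint_lines A B C ap am bp bm cp cm :
  1 + ap != 0 -> 1 + am != 0 -> 1 + bp != 0 -> 1 + bm != 0 -> 1 + cp != 0 -> 1 + cm != 0 ->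
  det3 (line_eqn (divpoint C A bp) (divpoint B A cm))
       (line_eqn (divpoint A B cp) (divpoint C B am))
       (line_eqn (divpoint B C ap) (divpoint A C bm))
  = cross (B - A) (C - A) ^+ 2
    * ((ap * bp * cp + am * bm * cm) - (1 - ap * am - bp * bm - cp * cm))
    / ((1 + ap) * (1 + am) * (1 + bp) * (1 + bm) * (1 + cp) * (1 + cm)).
Proof.
move=> nap nam nbp nbm ncp ncm.
rewrite /det3 /minor2 /line_eqn /divpoint /cross !mxE /=.
by field; rewrite nap nam nbp nbm ncp ncm.
Qed.

End PlaneGeometry.

Theorem theorem3 (R : realFieldType)
  (A B C Ap Am Bp Bm Cp Cm : point R)
  (ap am bp bm cp cm : R) :
  ~ collinear A B C ->
  on_line B C Ap -> on_line B C Am ->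
  on_line C A Bp -> on_line C A Bm ->
  on_line A B Cp -> on_line A B Cm ->
  Ap <> C -> Am <> B -> Bp <> A -> Bm <> C -> Cp <> B -> Cm <> A ->
  signed_ratio B Ap C ap ->
  signed_ratio C Bp A bp ->
  signed_ratio A Cp B cp ->
  signed_ratio C Am B am ->
  signed_ratio A Bm C bm ->
  signed_ratio B Cm A cm ->
  (proj_concurrent Bp Cm Cp Am Ap Bm <->
   ap * bp * cp + am * bm * cm = 1 - ap * am - bp * bm - cp * cm).
Proof.
(* Incidence and distinctness of the six points follow from the ratio equations. *)
move=> ncol _ _ _ _ _ _ _ _ _ _ _ _ sAp sBp sCp sAm sBm sCm.
have [nBC nCA nAB] := noncollinear_neq ncol.
have nap := signed_ratio_neqN1 sAp nBC.
have nbp := signed_ratio_neqN1 sBp nCA.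
have ncp := signed_ratio_neqN1 sCp nAB.
have nam := signed_ratio_neqN1 sAm (contra_neq esym nBC).
have nbm := signed_ratio_neqN1 sBm (contra_neq esym nCA).
have ncm := signed_ratio_neqN1 sCm (contra_neq esym nAB).
rewrite (signed_ratio_divpoint sAp) // (signed_ratio_divpoint sBp) //.
rewrite (signed_ratio_divpoint sCp) // (signed_ratio_divpoint sAm) //.
rewrite (signed_ratio_divpoint sBm) // (signed_ratio_divpoint sCm) //.
have ncross : cross (B - A) (C - A) != 0 by apply/eqP.
have nden : (1 + ap) * (1 + am) * (1 + bp) * (1 + bm) * (1 + cp) * (1 + cm) != 0.
  by rewrite !mulf_neq0.
rewrite proj_concurrentE det3_divpoint_lines //; split => [/eqP | ->].
  rewrite mulf_eq0 invr_eq0 (negbTE nden) orbF mulf_eq0 expf_eq0 (negbTE ncross).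
  by rewrite andbF orFb subr_eq0 => /eqP.
by rewrite subrr mulr0 mul0r.
Qed.
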